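(* Let $(\mathcal{X},\mathcal{B},\lambda)$ be a measure space with $\lambda$ positive and $\sigma$-finite, $P$ a probability measure with density $f\in\mathcal{L}^2(\mathcal{X},\lambda)$ with respect to $\lambda$, and $X_1,\dots,X_N$ i.i.d. with law $P$. Let $f_1,\dots,f_m\in\mathcal{L}^2$ with $D_k=\int f_k^2d\lambda>0$, and assume there are known constants $C_k>0$ with $|f_k(x)|\le\sqrt{C_kD_k}$ for all $x$ and all $k$. Let $a>1$, $\varepsilon>0$ and $k\in\{1,\dots,m\}$, and let $$B=\left\{a^l:\ 0\le l\le\left\lfloor\frac{\log\frac{N}{\sqrt{C_kD_k}}}{\log a}\right\rfloor-1\right\}.$$ Then with $P^{\otimes N}$-probability at least $1-\varepsilon$, $$\sup_{\beta\in B}\alpha^{\inf}_k\left(\frac{\varepsilon\log a}{\log N-\frac12\log C_kD_k},\beta\right)\le\overline{\alpha}_k\le\inf_{\beta\in B}\alpha^{\sup}_k\left(\frac{\varepsilon\log a}{\log N-\frac12\log C_kD_k},\beta\right).$$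
   Context: $\overline{\alpha}_k=\frac{\int f_kf\,d\lambda}{D_k}$. For $\eta>0$ and $\beta>0$: $$\alpha^{\sup}_k(\eta,\beta)=\frac{N-N\exp\left[\frac1N\sum_{i=1}^N\log\left(1-\frac{\beta}{N}f_k(X_i)\right)-\frac{\log\frac{2m}{\eta}}{N}\right]}{D_k\beta},\quad \alpha^{\inf}_k(\eta,\beta)=\frac{N\exp\left[\frac1N\sum_{i=1}^N\log\left(1+\frac{\beta}{N}f_k(X_i)\right)-\frac{\log\frac{2m}{\eta}}{N}\right]-N}{D_k\beta}.$$ Conventions: $\sup\emptyset=-\infty$, $\inf\emptyset=+\infty$. *)

From HB Require Import structures.
From mathcomp Require Import all_boot all_order all_algebra.
From mathcomp Require Import all_classical all_reals all_analysis.
Set Implicit Arguments. Unset Strict Implicit. Unset Printing Implicit Defensive.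
Import Order.TTheory GRing.Theory Num.Theory.
Local Open Scope ring_scope.
Local Open Scope classical_set_scope.

(* Confidence bounds of the paper, for a sample x : 'I_N -> T, the function
   g = f_k, its squared norm Dk = D_k, the number m of functions, eta, beta. *)
Definition alpha_sup (R : realType) (T : Type) (N m : nat) (g : T -> R)
  (Dk : R) (x : 'I_N -> T) (eta beta : R) : R :=
  (N%:R - N%:R * expR ((N%:R)^-1 * (\sum_(i < N) ln (1 - beta / N%:R * g (x i)))
                       - ln (2 * m%:R / eta) / N%:R)) / (Dk * beta).

Definition alpha_inf (R : realType) (T : Type) (N m : nat) (g : T -> R)
  (Dk : R) (x : 'I_N -> T) (eta beta : R) : R :=
  (N%:R * expR ((N%:R)^-1 * (\sum_(i < N) ln (1 + beta / N%:R * g (x i)))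
                - ln (2 * m%:R / eta) / N%:R) - N%:R) / (Dk * beta).

Definition mutually_independent (d d' : measure_display) (Omega : measurableType d)
  (T : measurableType d') (R : realType) (Pr : probability Omega R) (N : nat)
  (X : 'I_N -> Omega -> T) : Prop :=
  forall A : 'I_N -> set T, (forall i, measurable (A i)) ->
    Pr (\bigcap_(i in [set: 'I_N]) (X i @^-1` A i)) =
    (\prod_(i < N) Pr (X i @^-1` A i))%E.

From HB Require Import structures.
From mathcomp Require Import all_boot all_order all_algebra.
From mathcomp Require Import all_classical all_reals all_analysis.
From mathcomp Require Import ring lra measurable_realfun.
Import Order.TTheory GRing.Theory Num.Theory.
Import numFieldNormedType.Exports.
Local Open Scope ring_scope.
Local Open Scope classical_set_scope.

(* For beta = a^l, the bound alpha_inf <= abar fails only if the product of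
   the factors 1 + (beta/N) f_k(X_i) exceeds (1 + (beta/N) abar D_k)^N 2m/eta,
   where 1 + (beta/N) abar D_k is their common mean, and symmetrically for
   alpha_sup with 1 - (beta/N) f_k. By independence the product of the factors
   has expectation the N-th power of the mean, so Markov's inequality bounds
   each of these events by eta/(2m); a union bound over the
   log(N/sqrt(C_k D_k))/log a values of beta gives eps. Independence is only
   available on cylinder sets, so the expectation of the product is controlled
   through step functions dominating the factors. *)

Lemma measure_bigsetU_le {d} {T : measurableType d} {R : realType}
    (mu : {measure set T -> \bar R}) {I : Type} {r : seq I} {P : pred I}
    {F : I -> set T} : (forall i, measurable (F i)) ->
  (mu (\big[setU/set0]_(i <- r | P i) F i) <= \sum_(i <- r | P i) mu (F i))%E.
Proof.
move=> mF; elim: r => [|i r IH]; first by rewrite !big_nil measure0.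
rewrite !big_cons; case: (P i) => //.
apply: le_trans (measureU2 _ _ _) _ => //; last exact: leeD.
exact: bigsetU_measurable.
Qed.

Lemma le_exprD_right (R : realType) (x mu : R) (n : nat) :
  (forall del, 0 < del -> x <= (mu + del) ^+ n) -> x <= mu ^+ n.
Proof.
move=> le_x.
have cvg_pow : (mu + harmonic k) ^+ n @[k --> \oo] --> (mu + 0) ^+ n.
  apply: (@continuous_cvg _ _ _ _ _ (fun k => mu + harmonic k) (fun y : R => y ^+ n)).
    exact: exprn_continuous.
  by apply: cvgD; [exact: cvg_cst | exact: cvg_harmonic].
rewrite -[mu]addr0; apply: (ler_cvg_to (cvg_cst x) cvg_pow).
by near=> k; apply: le_x; rewrite /harmonic invr_gt0 ltr0Sn.
Unshelve. all: by end_near.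
Qed.

Lemma one_sub_mul_gt0 {R : realFieldType} {s y B : R} :
  `|s| * B < 1 -> `|y| <= B -> 0 < 1 - s * y.
Proof.
move=> sB yB; rewrite subr_gt0; apply: le_lt_trans sB.
by apply: le_trans (ler_norm _) _; rewrite normrM ler_wpM2l.
Qed.

Lemma expR_mean_ln_le (R : realType) (N : nat) (y : 'I_N -> R) (mu t : R) :
    (0 < N)%N -> (forall i, 0 < y i) -> 0 < mu -> 0 < t ->
    \prod_i y i <= mu ^+ N * t ->
  expR ((N%:R)^-1 * (\sum_i ln (y i)) - ln t / N%:R) <= mu.
Proof.
move=> N0 y0 mu0 t0 le_prod.
have sum_ln : \sum_i ln (y i) = ln (\prod_i y i).
  by rewrite -[LHS]expRK expR_sum; under eq_bigr do rewrite lnK ?posrE //.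
rewrite -ler_ln ?posrE ?expR_gt0 // expRK mulrC -mulrBl ler_pdivrMr ?ltr0n //.
rewrite sum_ln lerBlDr mulr_natr -lnXn // -lnM ?posrE ?exprn_gt0 //.
by rewrite ler_ln ?posrE ?prodr_gt0 ?mulr_gt0 ?exprn_gt0.
Qed.

Lemma mean_le_alpha_sup (R : realType) (T : Type) (N m : nat) (g : T -> R)
    (x : 'I_N -> T) (Dk eta beta I : R) :
    (0 < N)%N -> 0 < Dk -> 0 < beta ->
    expR ((N%:R)^-1 * (\sum_i ln (1 - beta / N%:R * g (x i)))
          - ln (2 * m%:R / eta) / N%:R) <= 1 - beta / N%:R * I ->
  I / Dk <= alpha_sup m g Dk x eta beta.
Proof.
move=> N0 Dk0 beta0; set e := expR _ => le_e.
have NbE : N%:R * (beta / N%:R) = beta by rewrite mulrCA divff ?mulr1 // pnatr_eq0 -lt0n.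
rewrite /alpha_sup -/e ler_pdivlMr ?mulr_gt0 // mulrA divfK ?gt_eqF //.
by have := ler_wpM2l (ler0n _ N) le_e; rewrite mulrBr mulr1 mulrA NbE; lra.
Qed.

Lemma alpha_inf_le_mean (R : realType) (T : Type) (N m : nat) (g : T -> R)
    (x : 'I_N -> T) (Dk eta beta I : R) :
    (0 < N)%N -> 0 < Dk -> 0 < beta ->
    expR ((N%:R)^-1 * (\sum_i ln (1 + beta / N%:R * g (x i)))
          - ln (2 * m%:R / eta) / N%:R) <= 1 + beta / N%:R * I ->
  alpha_inf m g Dk x eta beta <= I / Dk.
Proof.
move=> N0 Dk0 beta0; set e := expR _ => le_e.
have NbE : N%:R * (beta / N%:R) = beta by rewrite mulrCA divff ?mulr1 // pnatr_eq0 -lt0n.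
rewrite /alpha_inf -/e ler_pdivrMr ?mulr_gt0 // mulrA divfK ?gt_eqF //.
by have := ler_wpM2l (ler0n _ N) le_e; rewrite mulrDr mulr1 mulrA NbE; lra.
Qed.

Lemma le_floor_sub1E (R : archiDomainType) (x : R) (l : nat) :
  (l%:Z <= Num.floor x - 1) = (l < Num.truncn x)%N.
Proof. by rewrite lerBrDr floor_ge_int truncn_gt_nat intrD -pmulrn natr1. Qed.

Lemma lt_truncn_ln_div {R : realType} {a y : R} {l : nat} : 1 < a -> 0 < y ->
  (l < Num.truncn (ln y / ln a))%N -> a ^+ l.+1 <= y.
Proof.
move=> a1 y0; have a0 : 0 < a := lt_trans ltr01 a1.
rewrite truncn_gt_nat ler_pdivlMr ?ln_gt0 // => le_l.
by rewrite -ler_ln ?posrE ?exprn_gt0 // lnXn // -mulr_natl.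
Qed.

Lemma truncn_ln_div_mul_le {R : realType} {a eps : R} (y : R) : 1 < a -> 0 <= eps ->
  (Num.truncn (ln y / ln a))%:R * (eps * ln a / ln y) <= eps.
Proof.
move=> a1 eps0; have la0 : 0 < ln a by rewrite ln_gt0.
set n := Num.truncn _; have [ly0|ly0] := ltP 0 (ln y); last first.
  have : eps * ln a / ln y <= 0.
    by apply: mulr_ge0_le0; [exact: mulr_ge0 eps0 (ltW la0) | rewrite invr_le0].
  by move/(mulr_ge0_le0 (ler0n _ n))/le_trans; apply.
have n_ratio : n%:R * (ln a / ln y) <= 1.
  rewrite -ler_pdivlMr ?divr_gt0 // div1r invf_div.
  by rewrite truncn_le divr_ge0 ?ltW.
have -> : n%:R * (eps * ln a / ln y) = eps * (n%:R * (ln a / ln y)) by ring.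
exact: ler_piMr.
Qed.

Section iid_sample.
Context {d : measure_display} {T : measurableType d} {R : realType}.
Context {lam : {measure set T -> \bar R}} {P : probability T R} {f : T -> R}.
Hypotheses (mf : measurable_fun setT f) (f0 : forall x, 0 <= f x)
  (densityP : forall A, measurable A -> P A = (\int[lam]_(x in A) (f x)%:E)%E).
Context {dO : measure_display} {Omega : measurableType dO} {Pr : probability Omega R}.
Context {N : nat} {X : 'I_N -> Omega -> T}.
Hypotheses (mX : forall i, measurable_fun setT (X i))
  (lawX : forall i A, measurable A -> Pr (X i @^-1` A) = P A)
  (indX : mutually_independent Pr X).

Lemma integral_density : (\int[lam]_x (f x)%:E = 1)%E.
Proof. by rewrite -densityP // probability_setT. Qed.

Lemma integrable_density : lam.-integrable setT (fun x => (f x)%:E).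
Proof.
apply/integrableP; split; first exact/measurable_EFinP.
under eq_integral do rewrite /= ger0_norm //.
by rewrite integral_density ltry.
Qed.

Section bounded_function.
Context {u : T -> R} {B : R}.
Hypotheses (mu : measurable_fun setT u) (u_bound : forall x, `|u x| <= B).

Lemma integrable_mul_density : lam.-integrable setT (fun x => (u x * f x)%:E).
Proof.
apply: (@le_integrable _ _ _ _ _ _ _ (fun x => (B%:E * (f x)%:E)%E)) => //.
- by apply/measurable_EFinP; exact: measurable_funM.
- move=> x _ /=; rewrite lee_fin !normrM (ger0_norm (f0 x)) ler_wpM2r //.
  exact: le_trans (u_bound x) (ler_norm _).
- exact: integrableZl integrable_density.
Qed.

Lemma integral_affine_mul_density (a b : R) :
  (\int[lam]_x ((a + b * u x) * f x)%:E =
   (a + b * fine (\int[lam]_x (u x * f x)%:E))%:E)%E.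
Proof.
under eq_integral do rewrite mulrDl EFinD -mulrA !EFinM.
rewrite integralD //; last 2 first.
- exact: integrableZl integrable_density.
- exact: integrableZl integrable_mul_density.
rewrite !integralZl // ?integrable_density ?integrable_mul_density //.
rewrite integral_density mule1.
have /fineK <- := integrable_fin_num measurableT integrable_mul_density.
by rewrite -EFinM -EFinD.
Qed.

Lemma abs_mean_le : `|fine (\int[lam]_x (u x * f x)%:E)| <= B.
Proof.
set I := fine _.
have shifted_ge0 b : `|b| <= 1 -> 0 <= B + b * I.
  move=> b1; rewrite -lee_fin -integral_affine_mul_density.
  apply: integral_ge0 => x _; rewrite lee_fin mulr_ge0 //.
  have : `|b * u x| <= B by rewrite normrM; apply: le_trans (u_bound x); rewrite ler_piMl.
  by case/ler_normlP; lra.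
have := shifted_ge0 1; have := shifted_ge0 (-1).
rewrite normrN normr1 => /(_ (lexx _)) le1 /(_ (lexx _)) le2.
by apply/ler_normlP; split; lra.
Qed.

End bounded_function.

Lemma sum_fibers_le_integral {J : finType} {idx : T -> J} {v : J -> R} (g : T -> R) :
    (forall j, measurable (idx @^-1` [set j])) -> measurable_fun setT g ->
    (forall j, 0 <= v j) -> (forall x, v (idx x) <= g x) ->
  ((\sum_j v j * fine (P (idx @^-1` [set j])))%:E <= \int[lam]_x (g x * f x)%:E)%E.
Proof.
move=> midx mg v0 vg.
have g0 x : 0 <= g x := le_trans (v0 _) (vg x).
have fibersT : \big[setU/set0]_(j <- index_enum J) idx @^-1` [set j] = setT.
  apply/seteqP; split=> // x _; rewrite -bigcup_seq.
  by exists (idx x); rewrite /= ?mem_index_enum.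
rewrite -fibersT ge0_integral_bigsetU //; last 4 first.
- exact: index_enum_uniq.
- by move=> i j _ _ [x [/= <- <-]].
- by rewrite fibersT; apply/measurable_EFinP; exact: measurable_funM.
- by move=> x _; rewrite lee_fin mulr_ge0.
rewrite -sumEFin; apply: lee_sum => j _.
rewrite EFinM fineK ?fin_num_measure // densityP // -ge0_integralZl //; last 3 first.
- by apply/measurable_funTS/measurable_EFinP.
- by move=> x _; rewrite lee_fin.
- by rewrite lee_fin.
apply: ge0_le_integral => //.
- by move=> x _; rewrite mule_ge0 // lee_fin.
- by apply/measurable_funTS/measurable_EFinP/measurable_funM => //; exact: measurable_cst.
- by apply/measurable_funTS/measurable_EFinP/measurable_funM.
- by move=> x /= <-; rewrite -EFinM lee_fin ler_wpM2r.
Qed.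

Definition step_index (h : T -> R) (M del : R) (x : T) : 'I_(Num.truncn (M / del)).+1 :=
  inord (Num.truncn (h x / del)).

Definition step_value {n : nat} (del : R) (j : 'I_n) : R := j.+1%:R * del.

Section step_index.
Context {h : T -> R} {M del : R}.
Hypotheses (mh : measurable_fun setT h) (h_bound : forall x, 0 <= h x <= M)
  (del0 : 0 < del).
Local Notation step_index := (step_index h M del).

Lemma step_indexE x : nat_of_ord (step_index x) = Num.truncn (h x / del).
Proof.
rewrite inordK // ltnS le_truncn // ler_pM2r ?invr_gt0 //.
by case/andP: (h_bound x).
Qed.

Lemma step_index_fiber (j : 'I_(Num.truncn (M / del)).+1) :
  step_index @^-1` [set j] = h @^-1` `[j%:R * del, j.+1%:R * del[.
Proof.
apply/seteqP; split=> x /=; rewrite in_itv /= -ler_pdivlMr // -ltr_pdivrMr //.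
  move=> <-; rewrite step_indexE; apply: truncn_itv (divr_ge0 _ (ltW del0)).
  by case/andP: (h_bound x).
by move=> hx; apply: val_inj; rewrite /= step_indexE (truncn_def hx).
Qed.

Lemma measurable_step_fiber j : measurable (step_index @^-1` [set j]).
Proof. by rewrite step_index_fiber -[X in measurable X]setTI; exact: mh. Qed.

Lemma step_value_ge0 {n : nat} (j : 'I_n) : 0 <= step_value del j.
Proof. by rewrite mulr_ge0 ?ltW. Qed.

Lemma step_index_bounds x : h x <= step_value del (step_index x) <= h x + del.
Proof.
have : (step_index @^-1` [set step_index x]) x by [].
rewrite step_index_fiber /= in_itv /= => /andP[lo hi].
by rewrite /step_value ltW //= -addn1 natrD mulrDl mul1r lerD2r.
Qed.

Lemma prod_le_prod_step {n : nat} (y : 'I_n -> T) :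
  \prod_i h (y i) <= \prod_i step_value del (step_index (y i)).
Proof.
apply: ler_prod => i _; case/andP: (h_bound (y i)) => -> _ /=.
by case/andP: (step_index_bounds (y i)).
Qed.

Lemma sum_step_le_mean :
  \sum_j step_value del j * fine (P (step_index @^-1` [set j])) <=
  fine (\int[lam]_x (h x * f x)%:E) + del.
Proof.
have h_norm x : `|h x| <= M by case/andP: (h_bound x) => h0 hM; rewrite ger0_norm.
have mg : measurable_fun setT (fun x => del + 1 * h x).
  by apply: measurable_funD => //; apply: measurable_funM.
have step_le x : step_value del (step_index x) <= del + 1 * h x.
  by rewrite mul1r addrC; case/andP: (step_index_bounds x).
have := sum_fibers_le_integral _ measurable_step_fiber mg step_value_ge0 step_le.
by rewrite (integral_affine_mul_density mh h_norm) lee_fin mul1r addrC.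
Qed.

End step_index.

Section simple_functions.
Context {J : finType} {idx : T -> J}.
Hypothesis midx : forall j, measurable (idx @^-1` [set j]).

Lemma cylinderE (phi : 'I_N -> J) :
  [set w | forall i, idx (X i w) = phi i] =
  \bigcap_(i in [set: 'I_N]) X i @^-1` (idx @^-1` [set phi i]).
Proof. by apply/seteqP; split=> w /= Hw i; [move=> _ | exact: Hw]. Qed.

Lemma measurable_cylinder (phi : 'I_N -> J) :
  measurable [set w | forall i, idx (X i w) = phi i].
Proof.
rewrite cylinderE; apply: fin_bigcap_measurable => // i _.
by rewrite -[X in measurable X]setTI; exact: mX.
Qed.

Lemma probability_cylinder (phi : 'I_N -> J) :
  Pr [set w | forall i, idx (X i w) = phi i] =
  (\prod_i fine (P (idx @^-1` [set phi i])))%:E.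
Proof.
rewrite cylinderE indX // -prodEFin; apply: eq_bigr => i _.
by rewrite lawX // fineK // fin_num_measure.
Qed.

Lemma prod_simple_gtE (v : J -> R) (c : R) :
  [set w | c < \prod_i v (idx (X i w))] =
  \big[setU/set0]_(phi : {ffun 'I_N -> J} | c < \prod_i v (phi i))
    [set w | forall i, idx (X i w) = phi i].
Proof.
rewrite -bigcup_pred; apply/seteqP; split=> w /=.
  move=> cw; exists [ffun i => idx (X i w)]; last by move=> i; rewrite ffunE.
  by rewrite /mkset unfold_in /=; under eq_bigr do rewrite ffunE.
by move=> [phi]; rewrite /mkset unfold_in /= => cphi wphi; under eq_bigr do rewrite wphi.
Qed.

Lemma measurable_prod_simple_gt (v : J -> R) (c : R) :
  measurable [set w | c < \prod_i v (idx (X i w))].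
Proof.
rewrite prod_simple_gtE; apply: bigsetU_measurable => phi _.
exact: measurable_cylinder.
Qed.

Lemma markov_prod_simple (v : J -> R) (c : R) :
    (forall j, 0 <= v j) -> 0 < c ->
  (Pr [set w | (c < \prod_i v (idx (X i w)))%R] <=
    (((\sum_j v j * fine (P (idx @^-1` [set j]))) ^+ N) / c)%:E)%E.
Proof.
move=> v0 c0; pose p j := fine (P (idx @^-1` [set j])).
have p0 j : 0 <= p j by rewrite fine_ge0.
rewrite prod_simple_gtE.
apply: le_trans (measure_bigsetU_le Pr (fun phi : {ffun _} => measurable_cylinder phi)) _.
have -> : (\sum_j v j * p j) ^+ N =
    \sum_(phi : {ffun 'I_N -> J}) \prod_i (v (phi i) * p (phi i)).
  by rewrite -(bigA_distr_bigA (fun _ j => v j * p j)) /= prodr_const card_ord.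
rewrite mulr_suml -sumEFin big_mkcond /=; apply: lee_sum => phi _.
have vp0 : 0 <= \prod_i (v (phi i) * p (phi i)).
  by apply: prodr_ge0 => i _; rewrite mulr_ge0.
case: ifP => [cphi|_]; last by rewrite lee_fin divr_ge0 // ltW.
rewrite probability_cylinder lee_fin big_split /= ler_pdivlMr // mulrC /p.
rewrite ler_wpM2r; [by [] | | exact: ltW].
by apply: prodr_ge0 => i _; exact: p0.
Qed.

End simple_functions.

Lemma measurable_prod_gt (h : T -> R) (c : R) : measurable_fun setT h ->
  measurable [set w | c < \prod_i h (X i w)].
Proof.
move=> mh; have mF : measurable_fun setT (fun w => \prod_i h (X i w)).
  by apply: measurable_prod => i _; exact: measurableT_comp.
have -> : [set w | c < \prod_i h (X i w)] =
    (fun w => \prod_i h (X i w)) @^-1` `]c, +oo[.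
  by apply/seteqP; split=> w /=; rewrite in_itv /= andbT.
by rewrite -[X in measurable X]setTI; exact: mF.
Qed.

Lemma markov_prod {h : T -> R} {M : R} (c : R) :
    measurable_fun setT h -> (forall x, 0 <= h x <= M) -> 0 < c ->
  (Pr [set w | (c < \prod_i h (X i w))%R] <=
    ((fine (\int[lam]_x (h x * f x)%:E) ^+ N) / c)%:E)%E.
Proof.
move=> mh h_bound c0; have mS := measurable_prod_gt _ c mh.
rewrite -(fineK (fin_num_measure Pr _ mS)) lee_fin ler_pdivlMr //.
apply: le_exprD_right => del del0.
have mfiber := measurable_step_fiber mh h_bound del0.
have le_step : (Pr [set w | (c < \prod_i h (X i w))%R] <=
    Pr [set w | (c < \prod_i step_value del (step_index h M del (X i w)))%R])%E.
  apply: le_measure; rewrite ?inE //; first exact: measurable_prod_simple_gt mfiber _ _.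
  by move=> w /= /lt_le_trans; apply; exact: prod_le_prod_step.
have le_simple := le_trans le_step
  (markov_prod_simple mfiber _ _ (step_value_ge0 del0) c0).
rewrite -(fineK (fin_num_measure Pr _ mS)) lee_fin ler_pdivlMr // in le_simple.
apply: le_trans le_simple _.
have sum0 : 0 <= \sum_j step_value del j * fine (P (step_index h M del @^-1` [set j])).
  by apply: sumr_ge0 => j _; rewrite mulr_ge0 ?fine_ge0 ?step_value_ge0.
have le_mean := sum_step_le_mean mh h_bound del0.
by apply: lerXn2r; rewrite // nnegrE (le_trans sum0).
Qed.

Section deviation.
Context {g : T -> R} {Bnd : R}.
Hypotheses (N0 : (0 < N)%N) (mg : measurable_fun setT g)
  (g_bound : forall x, `|g x| <= Bnd).
Local Notation I := (fine (\int[lam]_x (g x * f x)%:E)).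

Definition deviation_event (s t : R) : set Omega :=
  [set w | (1 - s * I) ^+ N * t < \prod_i (1 - s * g (X i w))].

Lemma measurable_deviation_event s t : measurable (deviation_event s t).
Proof.
apply: (measurable_prod_gt (fun x => 1 - s * g x)).
by apply: measurable_funB => //; exact: measurable_funM.
Qed.

Lemma probability_deviation_event_le s t : `|s| * Bnd < 1 -> 0 < t ->
  (Pr (deviation_event s t) <= (t^-1)%:E)%E.
Proof.
move=> sB t0.
have h_bound x : 0 <= 1 - s * g x <= 2.
  rewrite ltW ?(one_sub_mul_gt0 sB) //=.
  have : `|s * g x| <= 1.
    by rewrite normrM; apply: ltW (le_lt_trans _ sB); rewrite ler_wpM2l.
  by case/ler_normlP; lra.
have mh : measurable_fun setT (fun x => 1 - s * g x).
  by apply: measurable_funB => //; exact: measurable_funM.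
have meanE : fine (\int[lam]_x ((1 - s * g x) * f x)%:E) = 1 - s * I.
  under eq_integral do rewrite -mulNr.
  by rewrite (integral_affine_mul_density mg g_bound) mulNr.
have mean_gt0 : 0 < 1 - s * I := one_sub_mul_gt0 sB (abs_mean_le mg g_bound).
have c0 : 0 < (1 - s * I) ^+ N * t by rewrite mulr_gt0 ?exprn_gt0.
apply: le_trans (markov_prod _ mh h_bound c0) _.
by rewrite meanE lee_fin invfM mulrA divff ?mul1r // expf_neq0 // gt_eqF.
Qed.

Lemma probability_deviation_pair_le s t : `|s| * Bnd < 1 -> 0 < t ->
  (Pr (deviation_event s t `|` deviation_event (- s) t) <= (2 / t)%:E)%E.
Proof.
move=> sB t0; apply: le_trans (measureU2 Pr (measurable_deviation_event _ _)
  (measurable_deviation_event _ _)) _.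
rewrite -[2 / t]/(1 *+ 2 / t) mulr2n mulrDl mul1r EFinD.
by apply: leeD; apply: probability_deviation_event_le; rewrite ?normrN.
Qed.

Lemma expR_mean_ln_le_off_deviation s t w : `|s| * Bnd < 1 -> 0 < t ->
    ~ deviation_event s t w ->
  expR ((N%:R)^-1 * (\sum_i ln (1 - s * g (X i w))) - ln t / N%:R) <= 1 - s * I.
Proof.
move=> sB t0 /negP; rewrite -leNgt => le_prod.
apply: expR_mean_ln_le => // [i|]; first exact: one_sub_mul_gt0 sB (g_bound _).
exact: one_sub_mul_gt0 sB (abs_mean_le mg g_bound).
Qed.

Lemma alpha_bounds_off_deviation (m : nat) (Dk eta beta : R) w :
    (0 < m)%N -> 0 < Dk -> 0 < eta -> 0 < beta -> beta / N%:R * Bnd < 1 ->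
    ~ (deviation_event (beta / N%:R) (2 * m%:R / eta) `|`
       deviation_event (- (beta / N%:R)) (2 * m%:R / eta)) w ->
  alpha_inf m g Dk (fun i => X i w) eta beta <= I / Dk <=
  alpha_sup m g Dk (fun i => X i w) eta beta.
Proof.
move=> m0 Dk0 eta0 beta0 bB not_dev.
have t0 : 0 < 2 * m%:R / eta by rewrite divr_gt0 // mulr_gt0 ?ltr0n.
have sB : `|beta / N%:R| * Bnd < 1.
  by rewrite ger0_norm // divr_ge0 ?ler0n // ltW.
apply/andP; split.
- apply: alpha_inf_le_mean => //.
  have := expR_mean_ln_le_off_deviation (- (beta / N%:R)) _ w _ t0.
  rewrite normrN mulNr opprK => /(_ sB (fun dev => not_dev (or_intror dev))).
  by under eq_bigr do rewrite mulNr opprK.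
- apply: mean_le_alpha_sup => //.
  exact: expR_mean_ln_le_off_deviation _ _ _ sB t0 (fun dev => not_dev (or_introl dev)).
Qed.

Lemma concentration (m : nat) (Dk a eps : R) :
    (0 < m)%N -> 0 < Bnd -> 0 < Dk -> 1 < a -> 0 < eps ->
  let n := Num.truncn (ln (N%:R / Bnd) / ln a) in
  let eta := eps * ln a / ln (N%:R / Bnd) in
  exists E : set Omega, [/\ measurable E,
    E `<=` [set w | forall l, (l < n)%N ->
      alpha_inf m g Dk (fun i => X i w) eta (a ^+ l) <= I / Dk <=
      alpha_sup m g Dk (fun i => X i w) eta (a ^+ l)]
    & ((1 - eps)%:E <= Pr E)%E].
Proof.
move=> m0 Bnd0 Dk0 a1 eps0 n eta.
have NB0 : 0 < N%:R / Bnd by rewrite divr_gt0 ?ltr0n.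
have eta0 l : (l < n)%N -> 0 < eta.
  move=> /(leq_ltn_trans (leq0n l))/(lt_truncn_ln_div a1 NB0); rewrite expr1 => aNB.
  by rewrite divr_gt0 ?mulr_gt0 ?ln_gt0 // (lt_le_trans a1).
have levelB l : (l < n)%N -> a ^+ l / N%:R * Bnd < 1.
  move=> /(lt_truncn_ln_div a1 NB0); rewrite exprS ler_pdivlMr // => aB.
  rewrite mulrAC ltr_pdivrMr ?ltr0n // mul1r; apply: lt_le_trans aB.
  by rewrite ltr_pM2r // ltr_pMl ?exprn_gt0 // (lt_trans ltr01).
pose t := 2 * m%:R / eta.
pose bad l := deviation_event (a ^+ l / N%:R) t `|`
  deviation_event (- (a ^+ l / N%:R)) t.
have mbad l : measurable (bad l) by apply: measurableU; exact: measurable_deviation_event.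
have Pbad l : (l < n)%N -> (Pr (bad l) <= (eta / m%:R)%:E)%E.
  move=> ln; have eta_pos := eta0 l ln.
  have t0 : 0 < t by rewrite divr_gt0 // mulr_gt0 ?ltr0n.
  have -> : eta / m%:R = 2 / t.
    by rewrite /t; field; rewrite gt_eqF //= pnatr_eq0 -lt0n.
  apply: probability_deviation_pair_le t0.
  by rewrite ger0_norm ?levelB // divr_ge0 ?exprn_ge0 // ltW // (lt_trans ltr01).
exists (~` \big[setU/set0]_(l < n) bad l); split.
- by apply: measurableC; apply: bigsetU_measurable.
- move=> w /= good l ln; apply: alpha_bounds_off_deviation; rewrite ?exprn_gt0 ?levelB //.
  + exact: eta0 ln.
  + exact: lt_trans ltr01 a1.
  + by move=> bad_w; apply: good; exact: bigsetU_sup ln _ bad_w.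
have mU : measurable (\big[setU/set0]_(l < n) bad l) by apply: bigsetU_measurable.
have PU : (Pr (\big[setU/set0]_(l < n) bad l) <= (n%:R * (eta / m%:R))%:E)%E.
  apply: le_trans (Boole_inequality Pr (fun l _ => mbad l)) _.
  apply: (@le_trans _ _ (\sum_(l < n) (eta / m%:R)%:E)%E).
    by apply: lee_sum => l _; exact: Pbad.
  by rewrite sumEFin sumr_const card_ord mulr_natl.
have n_eta : n%:R * (eta / m%:R) <= eps.
  have [->|n0] := posnP n; first by rewrite mul0r ltW.
  apply: le_trans (truncn_ln_div_mul_le (N%:R / Bnd) a1 (ltW eps0)).
  rewrite -/n -/eta ler_wpM2l // ler_pdivrMr ?ltr0n // ler_peMr ?ler1n //.
  exact: ltW (eta0 _ n0).
rewrite probability_setC //.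
move: PU; rewrite -(fineK (fin_num_measure Pr _ mU)) -EFinB !lee_fin.
lra.
Qed.

End deviation.

End iid_sample.

Theorem corollary6 (R : realType) (d : measure_display) (T : measurableType d)
  (lam : {measure set T -> \bar R}) (Hsf : sigma_finite setT lam)
  (P : probability T R) (f : T -> R)
  (Hfm : measurable_fun setT f) (Hf0 : forall x, 0 <= f x)
  (Hdens : forall A, measurable A -> P A = (\int[lam]_(x in A) (f x)%:E)%E)
  (HfL2 : lam.-integrable setT (fun x => (f x ^+ 2)%:E))
  (dO : measure_display) (Omega : measurableType dO) (Pr : probability Omega R)
  (N : nat) (HN : (0 < N)%N) (X : 'I_N -> Omega -> T)
  (HXm : forall i, measurable_fun setT (X i))
  (HXlaw : forall i A, measurable A -> Pr (X i @^-1` A) = P A)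
  (HXind : mutually_independent Pr X)
  (m : nat) (fs : 'I_m -> T -> R)
  (Hfsm : forall k, measurable_fun setT (fs k))
  (HfsL2 : forall k, lam.-integrable setT (fun x => (fs k x ^+ 2)%:E))
  (D : 'I_m -> R)
  (HD : forall k, D k = fine (\int[lam]_x (fs k x ^+ 2)%:E)%E)
  (HDpos : forall k, 0 < D k)
  (C : 'I_m -> R) (HCpos : forall k, 0 < C k)
  (Hbound : forall k x, `|fs k x| <= Num.sqrt (C k * D k))
  (a eps : R) (Ha : 1 < a) (Heps : 0 < eps) (k : 'I_m) :
  let abar := fine (\int[lam]_x (fs k x * f x)%:E)%E / D k in
  let eta := eps * ln a / (ln N%:R - 2^-1 * ln (C k * D k)) in
  let Lset := [set l : nat |
      (l%:Z <= Num.floor (ln (N%:R / Num.sqrt (C k * D k)) / ln a) - 1)%R] in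
  exists E : set Omega, measurable E /\
    E `<=` [set w |
      (ereal_sup [set (alpha_inf m (fs k) (D k) (fun i => X i w) eta (a ^+ l))%:E
                 | l in Lset] <= abar%:E)%E /\
      (abar%:E <= ereal_inf [set (alpha_sup m (fs k) (D k) (fun i => X i w) eta (a ^+ l))%:E
                 | l in Lset])%E] /\
    ((1 - eps)%:E <= Pr E)%E.
Proof.
(* Neither square integrability, nor sigma-finiteness, nor the value of D k is
   needed: only 0 < D k and the uniform bound on fs k enter the argument. *)
move=> abar eta Lset.
have Bnd0 : 0 < Num.sqrt (C k * D k) by rewrite sqrtr_gt0 mulr_gt0.
have m0 : (0 < m)%N by apply: leq_ltn_trans (ltn_ord k).
have etaE : eta = eps * ln a / ln (N%:R / Num.sqrt (C k * D k)).
  have lnB : 2^-1 * ln (C k * D k) = ln (Num.sqrt (C k * D k)).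
    by rewrite -powR12_sqrt ?ln_powR // mulr_ge0 ?ltW.
  by rewrite /eta lnB ln_div ?posrE ?ltr0n.
move: (concentration Hfm Hf0 Hdens HXm HXlaw HXind HN (Hfsm k) (Hbound k)
  m (D k) a eps m0 Bnd0 (HDpos k) Ha Heps) => /= [E [mE good PE]].
exists E; split=> //; split=> // w /good good_w; rewrite etaE.
have Lset_lt l :
    Lset l -> (l < Num.truncn (ln (N%:R / Num.sqrt (C k * D k)) / ln a))%N.
  by rewrite /Lset /= le_floor_sub1E.
split.
- by apply: ge_ereal_sup => _ [l /Lset_lt /good_w /andP[+ _] <-]; rewrite lee_fin.
- by apply/ereal_infP => _ [l /Lset_lt /good_w /andP[_ +] <-]; rewrite lee_fin.
Qed.
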